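(* Let $\bar\delta\ge1$ be an integer and $\pi$ the switching policy $(\bar\delta,0)$ (transmit in $(1,1,0)$, in every state $(0,1,\delta)$, $\delta\ge1$, and in $(1,0,\delta)$ for $\delta\ge\bar\delta$). Define $A=\frac{p\bar q^{\bar\delta-1}}{1-\bar qp_f}$, $a_1=\frac{p(1-\bar q^{\bar\delta-1})}{1-\bar q}+A$, $b_1=\frac{qp_f}{1-\bar pp_f}$, $B=\frac{q}{\bar p(1-\bar pp_f)}$, $D=(1+a_1)\bar pB+(1+b_1)\bar qA$. Then the stationary distribution of $\{S_t\}$ under $\pi$ is $\nu_{0,0,0}=\bar pB/D$, $\nu_{1,1,0}=\bar qA/D$, $\nu_{1,0,k}=p\bar q^{k-1}\nu_{0,0,0}$ for $1\le k\le\bar\delta$ and $\nu_{1,0,k}=p\bar q^{\bar\delta-1}(\bar qp_f)^{k-\bar\delta}\nu_{0,0,0}$ for $k>\bar\delta$, $\nu_{0,1,k}=qp_f(\bar pp_f)^{k-1}\nu_{1,1,0}$ for $k\ge1$. Moreover, $$\mathcal L(\pi)=\beta p\,\psi(\bar q,\bar\delta)\,\nu_{0,0,0}+\frac{(1-\beta)qp_f\nu_{1,1,0}}{(1-\bar pp_f)^2}+\lambda\big(A\nu_{0,0,0}+(1+b_1)\nu_{1,1,0}\big),$$ where $\psi(x,y)=\frac{1-(x+(1-x)y)x^{y-1}}{(1-x)^2}+\frac{(xp_f+(1-xp_f)y)x^{y-1}}{(1-xp_f)^2}$.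
   Context: Fix $p,q\in(0,1)$, $\bar p=1-p$, $\bar q=1-q$. The source $\{X_t\}$ is a Markov chain on $\{0,1\}$ with $\Pr[X_{t+1}=1\mid X_t=0]=p$, $\Pr[X_{t+1}=0\mid X_t=1]=q$; channel i.i.d. Bernoulli with success probability $p_s\in(0,1]$, independent of the source, $p_f=1-p_s$. Estimate dynamics: if $A_t=1$ and the transmission succeeds then $\hat X_{t+1}=X_{t+1}$, otherwise $\hat X_{t+1}=\hat X_t$. Age: $\Delta_{t+1}=\Delta_t+1$ if $X_{t+1}\ne\hat X_{t+1}$, else $0$. State $S_t=(X_t,\hat X_t,\Delta_t)\in\mathcal S=\{(0,0,0),(1,1,0)\}\cup\{(1,0,\delta),(0,1,\delta):\delta\ge1\}$, $S_1=(0,0,0)$; $\nu_{i,j,\delta}$ is the stationary probability of $(i,j,\delta)$. Per-state cost $c(s)=\beta\delta$ for $s=(1,0,\delta)$, $(1-\beta)\delta$ for $s=(0,1,\delta)$, $0$ for synced states, $\beta\in[0,1]$; per-stage cost $\ell(s,a)=\mathbb E[c(S_{t+1})\mid S_t=s,A_t=a]+\lambda\mathbb 1\{a=1\}$, $\lambda\ge0$; average cost $\mathcal L(\pi)=\limsup_{T\to\infty}\frac1T\sum_{t=1}^T\mathbb E^\pi[\ell(S_t,A_t)\mid S_1=(0,0,0)]$. The switching policy $(\bar\delta,\underline\delta)$ ($\bar\delta,\underline\delta\ge0$ integers) transmits iff $S_t=(1,0,\delta)$ with $\delta\ge\bar\delta$, or $S_t=(0,1,\delta)$ with $\delta\ge\underline\delta$,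 or ($\bar\delta=0$ and $S_t=(0,0,0)$), or ($\underline\delta=0$ and $S_t=(1,1,0)$). *)

From Stdlib Require Import Reals Lra.
From Coquelicot Require Import Coquelicot.
Open Scope R_scope.

(* A state (x, xh, delta) : bool encodes {0,1} (true = 1). *)
Definition state := (bool * bool * nat)%type.

Definition inS (s : state) : Prop :=
  match s with
  | (false, false, d) => d = 0%nat
  | (true, true, d) => d = 0%nat
  | (_, _, d) => (1 <= d)%nat
  end.

Definition sumS (f : state -> R) : R :=
  f (false, false, 0%nat) + f (true, true, 0%nat)
  + Series (fun n => f (true, false, S n))
  + Series (fun n => f (false, true, S n)).

Definition summableS (f : state -> R) : Prop :=
  ex_series (fun n => f (true, false, S n)) /\
  ex_series (fun n => f (false, true, S n)).

(* Source Markov chain: Pr[X_{t+1} = y | X_t = x]. *)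
Definition src (p q : R) (x y : bool) : R :=
  match x, y with
  | false, true => p
  | false, false => 1 - p
  | true, false => q
  | true, true => 1 - q
  end.

(* Next state given X_{t+1} = y, estimate xh' and current age d. *)
Definition nextst (y xh' : bool) (d : nat) : state :=
  (y, xh', if Bool.eqb y xh' then 0%nat else S d).

(* E[f(S_{t+1}) | S_t = s, A_t = a s] for a stationary deterministic
   policy a; ps = success probability of the channel. *)
Definition expnext (p q ps : R) (a : state -> bool) (f : state -> R)
  (s : state) : R :=
  let '(x, xh, d) := s in
  src p q x false *
    (if a s then ps * f (nextst false false d) + (1 - ps) * f (nextst false xh d)
     else f (nextst false xh d))
  + src p q x true *
    (if a s then ps * f (nextst true true d) + (1 - ps) * f (nextst true xh d)
     else f (nextst true xh d)).

Definition state_eqb (s t : state) : bool :=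
  let '(x, h, d) := s in let '(x', h', d') := t in
  Bool.eqb x x' && Bool.eqb h h' && Nat.eqb d d'.

Definition trans (p q ps : R) (a : state -> bool) (s s' : state) : R :=
  expnext p q ps a (fun t => if state_eqb t s' then 1 else 0) s.

Definition switching (dbar dund : nat) (s : state) : bool :=
  match s with
  | (true, false, d) => Nat.leb dbar d
  | (false, true, d) => Nat.leb dund d
  | (false, false, _) => Nat.eqb dbar 0
  | (true, true, _) => Nat.eqb dund 0
  end.

Definition cost (beta : R) (s : state) : R :=
  match s with
  | (true, false, d) => beta * INR d
  | (false, true, d) => (1 - beta) * INR d
  | _ => 0
  end.

Definition stage_cost (p q ps beta lam : R) (a : state -> bool) (s : state) : R :=
  expnext p q ps a (cost beta) s + lam * (if a s then 1 else 0).

(* dist t = law of S_{t+1} (so dist 0 is the law of S_1 = (0,0,0)). *)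
Fixpoint dist (p q ps : R) (a : state -> bool) (t : nat) : state -> R :=
  match t with
  | O => fun s => if state_eqb s (false, false, 0%nat) then 1 else 0
  | S t' => fun s' => sumS (fun s => dist p q ps a t' s * trans p q ps a s s')
  end.

(* Average cost L(pi) = limsup_T (1/T) sum_{t=1}^T E[l(S_t, A_t)]
   (the sequence is indexed by T-1). *)
Definition avg_cost (p q ps beta lam : R) (a : state -> bool) : Rbar :=
  LimSup_seq (fun T =>
    / (INR T + 1) *
    sum_n (fun t => sumS (fun s => dist p q ps a t s * stage_cost p q ps beta lam a s)) T).

Definition stationary (p q ps : R) (a : state -> bool) (nu : state -> R) : Prop :=
  (forall s, inS s -> 0 <= nu s) /\
  summableS nu /\ sumS nu = 1 /\
  (forall s', inS s' ->
     summableS (fun s => nu s * trans p q ps a s s') /\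
     sumS (fun s => nu s * trans p q ps a s s') = nu s').

Definition psi (pf x : R) (y : nat) : R :=
  (1 - (x + (1 - x) * INR y) * x ^ (y - 1)) / (1 - x) ^ 2
  + (x * pf + (1 - x * pf) * INR y) * x ^ (y - 1) / (1 - x * pf) ^ 2.

(* Under the switching policy the chain regenerates at the synchronised states (0,0,0) and
   (1,1,0); leaving them it enters a chain of desynchronised states whose age grows by one per
   step and whose probabilities decay geometrically (by 1-q, then by (1-q)(1-ps) once the age
   reaches the threshold, resp. by (1-p)(1-ps)).  The balance equations along these chains force
   this shape on every stationary distribution, and balance at (1,1,0) together with
   normalisation is a nonsingular 2x2 linear system for the two synchronised masses.
   For the average cost we solve the Poisson equation g + h = l + P h with a relative value
   function h that is affine in the age on each chain; since the expected age stays bounded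
   along the trajectory, the telescoped Cesaro averages of l converge to g, and the solvability
   condition of the Poisson equation at (0,0,0) identifies g with the closed form. *)

From Pilot Require Import Defs.
From Stdlib Require Import Reals Lra Lia.
From Coquelicot Require Import Coquelicot.
Open Scope R_scope.

Fixpoint psum (f : nat -> R) (n : nat) : R :=
  match n with O => 0 | S m => psum f m + f m end.

Lemma psum_ext_lt (f g : nat -> R) (n : nat) :
  (forall k, (k < n)%nat -> f k = g k) -> psum f n = psum g n.
Proof.
  induction n as [|n IH]; intros H; simpl; [reflexivity|].
  rewrite IH, H; [reflexivity|lia|intros; apply H; lia].
Qed.

Lemma psum_plus (f g : nat -> R) (n : nat) :
  psum (fun k => f k + g k) n = psum f n + psum g n.
Proof. induction n as [|n IH]; simpl; [ring|rewrite IH; ring]. Qed.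

Lemma psum_scal (c : R) (f : nat -> R) (n : nat) :
  psum (fun k => c * f k) n = c * psum f n.
Proof. induction n as [|n IH]; simpl; [ring|rewrite IH; ring]. Qed.

Lemma psum_succ_l (f : nat -> R) (n : nat) :
  psum f (S n) = f O + psum (fun k => f (S k)) n.
Proof.
  induction n as [|n IH]; [simpl; ring|].
  change (psum f (S (S n))) with (psum f (S n) + f (S n)). rewrite IH. simpl. ring.
Qed.

Lemma psum_le (f g : nat -> R) (n : nat) : (forall k, f k <= g k) -> psum f n <= psum g n.
Proof. intros H; induction n as [|n IH]; simpl; [lra|specialize (H n); lra]. Qed.

Lemma psum_nonneg (f : nat -> R) (n : nat) : (forall k, 0 <= f k) -> 0 <= psum f n.
Proof. intros H; induction n as [|n IH]; simpl; [lra|specialize (H n); lra]. Qed.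

Lemma psum_geom (x : R) (n : nat) : psum (fun k => x ^ k) n * (1 - x) = 1 - x ^ n.
Proof. induction n as [|n IH]; simpl; [ring|rewrite Rmult_plus_distr_r, IH; ring]. Qed.

Lemma psum_stable (f : nat -> R) (N M : nat) :
  (forall k, (N <= k)%nat -> f k = 0) -> (N <= M)%nat -> psum f M = psum f N.
Proof.
  intros H HM; induction HM as [|M HM IH]; simpl; [reflexivity|].
  rewrite IH, H by lia; ring.
Qed.

Lemma sum_n_psum (f : nat -> R) (n : nat) : sum_n f n = psum f (S n).
Proof.
  induction n as [|n IH].
  - rewrite sum_O; simpl; ring.
  - rewrite sum_Sn, IH; reflexivity.
Qed.

Lemma is_series_finite_support (f : nat -> R) (N : nat) :
  (forall k, (N <= k)%nat -> f k = 0) -> is_series f (psum f N).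
Proof.
  intros H; apply (filterlim_ext_loc (fun _ => psum f N)); [|apply filterlim_const].
  exists N; intros n Hn. rewrite sum_n_psum. symmetry; apply psum_stable; [exact H|lia].
Qed.

Lemma is_series_single (f : nat -> R) (m : nat) :
  (forall n, n <> m -> f n = 0) -> is_series f (f m).
Proof.
  intros H.
  replace (f m) with (psum f (S m)).
  2:{ simpl. rewrite (psum_ext_lt f (fun k => 0 * f k)), psum_scal; [ring|].
      intros k Hk; rewrite H by lia; ring. }
  apply is_series_finite_support; intros k Hk; apply H; lia.
Qed.

Lemma is_series_prefix (f : nat -> R) (m : nat) (l : R) :
  is_series (fun k => f (m + k)%nat) l -> is_series f (psum f m + l).
Proof.
  revert f l; induction m as [|m IH]; intros f l H.
  - simpl; rewrite Rplus_0_l; exact H.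
  - apply is_series_decr_1.
    match goal with |- is_series _ ?v => replace v with (psum (fun k => f (S k)) m + l) end.
    + apply IH; exact H.
    + rewrite psum_succ_l; unfold plus, opp; simpl; unfold plus, opp; simpl; ring.
Qed.

Lemma is_series_zero (f : nat -> R) : (forall n, f n = 0) -> is_series f 0.
Proof. intros H; apply (is_series_finite_support f 0); intros; apply H. Qed.

Lemma is_series_ext_R (f g : nat -> R) (l : R) :
  (forall n, f n = g n) -> is_series f l -> is_series g l.
Proof. apply is_series_ext. Qed.

Lemma is_series_scal_ext (c : R) (f g : nat -> R) (l : R) :
  (forall n, g n = c * f n) -> is_series f l -> is_series g (c * l).
Proof.
  intros Hg Hf. apply (is_series_ext_R (fun n => c * f n)); [intros n; symmetry; apply Hg|].
  apply (@is_series_scal_l R_AbsRing R_NormedModule), Hf.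
Qed.

Lemma is_series_geom_scal (c r : R) :
  0 <= r < 1 -> is_series (fun k => c * r ^ k) (c / (1 - r)).
Proof.
  intros Hr. apply (@is_series_scal_l R_AbsRing R_NormedModule c), is_series_geom.
  rewrite Rabs_pos_eq; lra.
Qed.

Lemma is_lim_seq_div_succ (e : nat -> R) (K : R) :
  (forall n, Rabs (e n) <= K) -> is_lim_seq (fun n => e n / (INR n + 1)) 0.
Proof.
  intros He.
  assert (Hinv : forall c, is_lim_seq (fun n => c * / (INR n + 1)) 0).
  { intros c. replace (Finite 0) with (Rbar_mult c 0) by (simpl; f_equal; ring).
    apply is_lim_seq_scal_l.
    replace (Finite 0) with (Rbar_inv p_infty) by reflexivity.
    apply is_lim_seq_inv; [|discriminate].
    apply (is_lim_seq_ext (fun n => INR (S n))); [intros; apply S_INR|].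
    apply (is_lim_seq_incr_1 INR p_infty), is_lim_seq_INR. }
  apply (is_lim_seq_le_le (fun n => - K * / (INR n + 1)) _ (fun n => K * / (INR n + 1))).
  - intros n.
    assert (Hn : 0 < / (INR n + 1)) by (apply Rinv_0_lt_compat; pose proof (pos_INR n); lra).
    destruct (proj1 (Rabs_le_between _ _) (He n)) as [H1 H2]. unfold Rdiv. split; nra.
  - apply Hinv.
  - apply Hinv.
Qed.

Lemma pow_le_one (x : R) (n : nat) : 0 <= x <= 1 -> x ^ n <= 1.
Proof.
  intros Hx; induction n as [|n IH]; simpl; [lra|].
  pose proof (pow_le x n (proj1 Hx)). nra.
Qed.

Lemma Rabs_affine_le (u x v : R) : 0 <= x -> Rabs (u * x + v) <= Rabs u * x + Rabs v.
Proof.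
  intros Hx. eapply Rle_trans; [apply Rabs_triang|]. rewrite Rabs_mult, (Rabs_pos_eq x Hx). lra.
Qed.

Lemma Rabs_affine_corr_le (u x v K c : R) :
  0 <= x -> Rabs c <= 1 -> Rabs (u * x + v + K * c) <= Rabs u * x + Rabs v + Rabs K.
Proof.
  intros Hx Hc. eapply Rle_trans; [apply Rabs_triang|].
  pose proof (Rabs_affine_le u x v Hx). rewrite Rabs_mult.
  pose proof (Rabs_pos K). pose proof (Rmult_le_compat_l _ _ _ (Rabs_pos K) Hc). lra.
Qed.

Lemma age_growth_le (c t r x : R) :
  0 <= c <= r -> r < 1 -> 0 <= t <= 1 -> 0 <= x -> c * ((1 - t) * (x + 1)) <= r * x + 1.
Proof.
  intros Hc Hr Ht Hx.
  assert (c * ((1 - t) * (x + 1)) <= c * (x + 1)) by (apply Rmult_le_compat_l; nra).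
  nra.
Qed.

Lemma linear2_unique (r c u v a b a' b' : R) :
  0 <= r -> 0 < c -> 0 < u -> 0 <= v ->
  b * c = a * r -> a * u + b * v = 1 -> b' * c = a' * r -> a' * u + b' * v = 1 ->
  a = a' /\ b = b'.
Proof.
  intros Hr Hc Hu Hv E1 E2 E1' E2'.
  assert (Hdet : 0 < r * v + c * u) by nra.
  assert (Ha : (a - a') * (r * v + c * u) = 0) by nra.
  assert (a = a') by (apply Rmult_integral in Ha; lra).
  subst a'. split; [reflexivity|].
  apply (Rmult_eq_reg_r c); lra.
Qed.

Lemma inS_ind (P : state -> Prop) :
  P (false, false, 0%nat) -> P (true, true, 0%nat) ->
  (forall n, P (true, false, S n)) -> (forall n, P (false, true, S n)) ->
  forall s, inS s -> P s.
Proof.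
  intros H00 H11 H10 H01 [[[|] [|]] [|d]] Hs; simpl in Hs; auto; lia.
Qed.

Lemma sumS_ext (f g : state -> R) : (forall s, inS s -> f s = g s) -> sumS f = sumS g.
Proof.
  intros H. unfold sumS.
  rewrite (H (false, false, 0%nat)), (H (true, true, 0%nat)) by reflexivity.
  rewrite (Series_ext _ (fun n => g (true, false, S n))),
    (Series_ext (fun n => f (false, true, S n)) (fun n => g (false, true, S n)));
    [reflexivity| |]; intros n; apply H; simpl; lia.
Qed.

Lemma sumS_of_series (f : state -> R) (l10 l01 : R) :
  is_series (fun n => f (true, false, S n)) l10 ->
  is_series (fun n => f (false, true, S n)) l01 ->
  summableS f /\ sumS f = f (false, false, 0%nat) + f (true, true, 0%nat) + l10 + l01.
Proof.
  intros H10 H01. split; [split; eexists; eassumption|].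
  unfold sumS. rewrite (is_series_unique _ _ H10), (is_series_unique _ _ H01). reflexivity.
Qed.

Definition supported_below (f : state -> R) (N : nat) : Prop :=
  forall n, (N <= n)%nat -> f (true, false, S n) = 0 /\ f (false, true, S n) = 0.

Lemma supported_below_mulr (f h : state -> R) (N : nat) :
  supported_below f N -> supported_below (fun s => f s * h s) N.
Proof. intros H n Hn; destruct (H n Hn) as [H10 H01]; rewrite H10, H01; split; ring. Qed.

Lemma sumS_supported (f : state -> R) (N : nat) : supported_below f N ->
  sumS f = f (false, false, 0%nat) + f (true, true, 0%nat)
           + psum (fun n => f (true, false, S n)) N + psum (fun n => f (false, true, S n)) N.
Proof.
  intros H. apply sumS_of_series; apply is_series_finite_support; intros k Hk; apply H, Hk.
Qed.

Lemma sumS_lin (f g : state -> R) (N : nat) (c1 c2 : R) :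
  supported_below f N -> supported_below g N ->
  sumS (fun s => c1 * f s + c2 * g s) = c1 * sumS f + c2 * sumS g.
Proof.
  intros Hf Hg.
  assert (Hfg : supported_below (fun s => c1 * f s + c2 * g s) N).
  { intros n Hn; destruct (Hf n Hn) as [-> ->], (Hg n Hn) as [-> ->]; split; ring. }
  rewrite !(sumS_supported _ N) by assumption.
  rewrite !psum_plus, !psum_scal; ring.
Qed.

Definition age (s : state) : R := INR (snd s).

Section Dynamics.

Variables (p q ps : R) (a : state -> bool).

Definition success_prob (s : state) : R := if a s then ps else 0.

Lemma expnext_000 (f : state -> R) :
  expnext p q ps a f (false, false, 0%nat) =
  (1 - p) * f (false, false, 0%nat)
  + p * (success_prob (false, false, 0%nat) * f (true, true, 0%nat)
         + (1 - success_prob (false, false, 0%nat)) * f (true, false, 1%nat)).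
Proof. unfold expnext, success_prob, nextst; simpl; destruct (a _); ring. Qed.

Lemma expnext_110 (f : state -> R) :
  expnext p q ps a f (true, true, 0%nat) =
  q * (success_prob (true, true, 0%nat) * f (false, false, 0%nat)
       + (1 - success_prob (true, true, 0%nat)) * f (false, true, 1%nat))
  + (1 - q) * f (true, true, 0%nat).
Proof. unfold expnext, success_prob, nextst; simpl; destruct (a _); ring. Qed.

Lemma expnext_10 (f : state -> R) (d : nat) :
  expnext p q ps a f (true, false, d) =
  q * f (false, false, 0%nat)
  + (1 - q) * (success_prob (true, false, d) * f (true, true, 0%nat)
               + (1 - success_prob (true, false, d)) * f (true, false, S d)).
Proof. unfold expnext, success_prob, nextst; simpl; destruct (a _); ring. Qed.

Lemma expnext_01 (f : state -> R) (d : nat) :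
  expnext p q ps a f (false, true, d) =
  (1 - p) * (success_prob (false, true, d) * f (false, false, 0%nat)
             + (1 - success_prob (false, true, d)) * f (false, true, S d))
  + p * f (true, true, 0%nat).
Proof. unfold expnext, success_prob, nextst; simpl; destruct (a _); ring. Qed.

(* [Defs.dist p q ps a (S t)] is [step (Defs.dist p q ps a t)] by conversion. *)
Definition step (mu : state -> R) (s' : state) : R :=
  sumS (fun s => mu s * trans p q ps a s s').

(* Rewriting with an [expnext_*] lemma whose state does not match makes unification unfold
   [expnext]; hence the dispatch on the state. *)
Ltac eval_trans :=
  unfold trans;
  repeat match goal with
  | |- context [expnext _ _ _ _ ?f (false, false, 0%nat)] => rewrite (expnext_000 f)
  | |- context [expnext _ _ _ _ ?f (true, true, 0%nat)] => rewrite (expnext_110 f)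
  | |- context [expnext _ _ _ _ ?f (true, false, ?d)] => rewrite (expnext_10 f d)
  | |- context [expnext _ _ _ _ ?f (false, true, ?d)] => rewrite (expnext_01 f d)
  end;
  cbn [state_eqb Bool.eqb Nat.eqb andb].

Lemma step_of_series (mu : state -> R) (s' : state) (l10 l01 : R) :
  is_series (fun n => mu (true, false, S n) * trans p q ps a (true, false, S n) s') l10 ->
  is_series (fun n => mu (false, true, S n) * trans p q ps a (false, true, S n) s') l01 ->
  summableS (fun s => mu s * trans p q ps a s s') /\
  step mu s' = mu (false, false, 0%nat) * trans p q ps a (false, false, 0%nat) s'
               + mu (true, true, 0%nat) * trans p q ps a (true, true, 0%nat) s' + l10 + l01.
Proof. apply (sumS_of_series (fun s => mu s * trans p q ps a s s')). Qed.

Lemma step_000 (mu : state -> R) (l10 l01 : R) :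
  is_series (fun n => mu (true, false, S n)) l10 ->
  is_series (fun n => success_prob (false, true, S n) * mu (false, true, S n)) l01 ->
  summableS (fun s => mu s * trans p q ps a s (false, false, 0%nat)) /\
  step mu (false, false, 0%nat) =
  (1 - p) * mu (false, false, 0%nat) + q * success_prob (true, true, 0%nat) * mu (true, true, 0%nat)
  + q * l10 + (1 - p) * l01.
Proof.
  intros H10 H01.
  destruct (step_of_series mu (false, false, 0%nat) (q * l10) ((1 - p) * l01)) as [Hs Hv].
  - eapply (is_series_scal_ext q); [|exact H10]; intros n; eval_trans; ring.
  - eapply (is_series_scal_ext (1 - p)); [|exact H01]; intros n; eval_trans; ring.
  - split; [exact Hs|]. rewrite Hv; eval_trans; ring.
Qed.

Lemma step_110 (mu : state -> R) (l10 l01 : R) :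
  is_series (fun n => success_prob (true, false, S n) * mu (true, false, S n)) l10 ->
  is_series (fun n => mu (false, true, S n)) l01 ->
  summableS (fun s => mu s * trans p q ps a s (true, true, 0%nat)) /\
  step mu (true, true, 0%nat) =
  p * success_prob (false, false, 0%nat) * mu (false, false, 0%nat)
  + (1 - q) * mu (true, true, 0%nat)
  + (1 - q) * l10 + p * l01.
Proof.
  intros H10 H01.
  destruct (step_of_series mu (true, true, 0%nat) ((1 - q) * l10) (p * l01)) as [Hs Hv].
  - eapply (is_series_scal_ext (1 - q)); [|exact H10]; intros n; eval_trans; ring.
  - eapply (is_series_scal_ext p); [|exact H01]; intros n; eval_trans; ring.
  - split; [exact Hs|]. rewrite Hv; eval_trans; ring.
Qed.

Lemma step_10_one (mu : state -> R) :
  summableS (fun s => mu s * trans p q ps a s (true, false, 1%nat)) /\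
  step mu (true, false, 1%nat) =
  p * (1 - success_prob (false, false, 0%nat)) * mu (false, false, 0%nat).
Proof.
  destruct (step_of_series mu (true, false, 1%nat) 0 0) as [Hs Hv];
    [apply is_series_zero; intros n; eval_trans; ring ..|].
  split; [exact Hs|]. rewrite Hv; eval_trans; ring.
Qed.

Lemma step_01_one (mu : state -> R) :
  summableS (fun s => mu s * trans p q ps a s (false, true, 1%nat)) /\
  step mu (false, true, 1%nat) =
  q * (1 - success_prob (true, true, 0%nat)) * mu (true, true, 0%nat).
Proof.
  destruct (step_of_series mu (false, true, 1%nat) 0 0) as [Hs Hv];
    [apply is_series_zero; intros n; eval_trans; ring ..|].
  split; [exact Hs|]. rewrite Hv; eval_trans; ring.
Qed.

Lemma step_10_succ (mu : state -> R) (k : nat) :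
  summableS (fun s => mu s * trans p q ps a s (true, false, S (S k))) /\
  step mu (true, false, S (S k)) =
  (1 - q) * (1 - success_prob (true, false, S k)) * mu (true, false, S k).
Proof.
  destruct (step_of_series mu (true, false, S (S k))
              (mu (true, false, S k) * trans p q ps a (true, false, S k) (true, false, S (S k))) 0)
    as [Hs Hv].
  - apply (is_series_single (fun n => _ * trans p q ps a (true, false, S n) _)).
    intros n Hn; eval_trans; destruct (Nat.eqb_spec n k); [lia|ring].
  - apply is_series_zero; intros n; eval_trans; ring.
  - split; [exact Hs|]. rewrite Hv; eval_trans; rewrite Nat.eqb_refl; ring.
Qed.

Lemma step_01_succ (mu : state -> R) (k : nat) :
  summableS (fun s => mu s * trans p q ps a s (false, true, S (S k))) /\
  step mu (false, true, S (S k)) =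
  (1 - p) * (1 - success_prob (false, true, S k)) * mu (false, true, S k).
Proof.
  destruct (step_of_series mu (false, true, S (S k)) 0
              (mu (false, true, S k) * trans p q ps a (false, true, S k) (false, true, S (S k))))
    as [Hs Hv].
  - apply is_series_zero; intros n; eval_trans; ring.
  - apply (is_series_single (fun n => _ * trans p q ps a (false, true, S n) _)).
    intros n Hn; eval_trans; destruct (Nat.eqb_spec n k); [lia|ring].
  - split; [exact Hs|]. rewrite Hv; eval_trans; rewrite Nat.eqb_refl; ring.
Qed.

Lemma step_supported (mu : state -> R) (N : nat) :
  supported_below mu N -> supported_below (step mu) (S N).
Proof.
  intros H [|k] Hk; [lia|].
  rewrite (proj2 (step_10_succ mu k)), (proj2 (step_01_succ mu k)).
  destruct (H k ltac:(lia)) as [-> ->]. split; ring.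
Qed.

Lemma dist_supported (t : nat) : supported_below (Defs.dist p q ps a t) t.
Proof.
  induction t as [|t IH]; [intros n _; split; reflexivity|].
  exact (step_supported _ _ IH).
Qed.

Ltac supported_series H :=
  apply is_series_finite_support; intros ? Hk;
  destruct (H _ Hk) as [Hk10 Hk01]; rewrite ?Hk10, ?Hk01; ring.

Section SupportedStep.

Variables (mu : state -> R) (N : nat).
Hypothesis mu_supp : supported_below mu N.

Lemma step_000_supported :
  step mu (false, false, 0%nat) =
  (1 - p) * mu (false, false, 0%nat) + q * success_prob (true, true, 0%nat) * mu (true, true, 0%nat)
  + q * psum (fun n => mu (true, false, S n)) N
  + (1 - p) * psum (fun n => success_prob (false, true, S n) * mu (false, true, S n)) N.
Proof. apply step_000; supported_series mu_supp. Qed.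

Lemma step_110_supported :
  step mu (true, true, 0%nat) =
  p * success_prob (false, false, 0%nat) * mu (false, false, 0%nat)
  + (1 - q) * mu (true, true, 0%nat)
  + (1 - q) * psum (fun n => success_prob (true, false, S n) * mu (true, false, S n)) N
  + p * psum (fun n => mu (false, true, S n)) N.
Proof. apply step_110; supported_series mu_supp. Qed.

Lemma psum_expnext_10 (h : state -> R) :
  psum (fun n => mu (true, false, S n) * expnext p q ps a h (true, false, S n)) N =
  q * h (false, false, 0%nat) * psum (fun n => mu (true, false, S n)) N
  + (1 - q) * h (true, true, 0%nat)
    * psum (fun n => success_prob (true, false, S n) * mu (true, false, S n)) N
  + psum (fun n => step mu (true, false, S (S n)) * h (true, false, S (S n))) N.
Proof.
  rewrite <- !psum_scal, <- !psum_plus. apply psum_ext_lt; intros n _.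
  rewrite expnext_10, (proj2 (step_10_succ mu n)); ring.
Qed.

Lemma psum_expnext_01 (h : state -> R) :
  psum (fun n => mu (false, true, S n) * expnext p q ps a h (false, true, S n)) N =
  (1 - p) * h (false, false, 0%nat)
    * psum (fun n => success_prob (false, true, S n) * mu (false, true, S n)) N
  + p * h (true, true, 0%nat) * psum (fun n => mu (false, true, S n)) N
  + psum (fun n => step mu (false, true, S (S n)) * h (false, true, S (S n))) N.
Proof.
  rewrite <- !psum_scal, <- !psum_plus. apply psum_ext_lt; intros n _.
  rewrite expnext_01, (proj2 (step_01_succ mu n)); ring.
Qed.

Lemma sumS_step_mul (h : state -> R) :
  sumS (fun s => step mu s * h s) = sumS (fun s => mu s * expnext p q ps a h s).
Proof.
  rewrite (sumS_supported _ (S N)) by (apply supported_below_mulr, step_supported, mu_supp).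
  rewrite (sumS_supported _ N) by (apply supported_below_mulr, mu_supp).
  rewrite !psum_succ_l; cbv beta.
  rewrite psum_expnext_10, psum_expnext_01, step_000_supported, step_110_supported,
    (proj2 (step_10_one mu)), (proj2 (step_01_one mu)), expnext_000, expnext_110.
  ring.
Qed.

End SupportedStep.

Hypotheses (hp : 0 < p < 1) (hq : 0 < q < 1) (hps : 0 < ps <= 1).

Lemma success_prob_bounds (s : state) : 0 <= success_prob s <= 1.
Proof. unfold success_prob; destruct (a s); lra. Qed.

Lemma step_nonneg (mu : state -> R) (N : nat) :
  supported_below mu N -> (forall s, inS s -> 0 <= mu s) ->
  forall s, inS s -> 0 <= step mu s.
Proof.
  intros Hsupp Hmu.
  assert (H10 : forall n, 0 <= mu (true, false, S n)) by (intros; apply Hmu; simpl; lia).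
  assert (H01 : forall n, 0 <= mu (false, true, S n)) by (intros; apply Hmu; simpl; lia).
  assert (H00 : 0 <= mu (false, false, 0%nat)) by (apply Hmu; reflexivity).
  assert (H11 : 0 <= mu (true, true, 0%nat)) by (apply Hmu; reflexivity).
  assert (Ht : forall s, 0 <= success_prob s) by (intros; apply success_prob_bounds).
  assert (Ht' : forall s, 0 <= 1 - success_prob s)
    by (intros s; pose proof (success_prob_bounds s); lra).
  assert (Hw : forall s x, 0 <= x -> 0 <= success_prob s * x) by (intros; apply Rmult_le_pos; auto).
  apply inS_ind.
  - rewrite (step_000_supported _ N Hsupp).
    pose proof (psum_nonneg _ N H10).
    pose proof (psum_nonneg _ N (fun n => Hw (false, true, S n) _ (H01 n))).
    pose proof (Hw (true, true, 0%nat) _ H11). nra.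
  - rewrite (step_110_supported _ N Hsupp).
    pose proof (psum_nonneg _ N H01).
    pose proof (psum_nonneg _ N (fun n => Hw (true, false, S n) _ (H10 n))).
    pose proof (Hw (false, false, 0%nat) _ H00). nra.
  - intros [|k]; [rewrite (proj2 (step_10_one _))|rewrite (proj2 (step_10_succ _ k))];
      repeat apply Rmult_le_pos; auto; lra.
  - intros [|k]; [rewrite (proj2 (step_01_one _))|rewrite (proj2 (step_01_succ _ k))];
      repeat apply Rmult_le_pos; auto; lra.
Qed.

Lemma dist_nonneg (t : nat) (s : state) : inS s -> 0 <= Defs.dist p q ps a t s.
Proof.
  revert s; induction t as [|t IH]; [apply inS_ind; intros; simpl; lra|].
  exact (step_nonneg _ t (dist_supported t) IH).
Qed.

Definition expect (t : nat) (f : state -> R) : R :=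
  sumS (fun s => Defs.dist p q ps a t s * f s).

Lemma expect_0 (f : state -> R) : expect 0 f = f (false, false, 0%nat).
Proof.
  unfold expect. rewrite (sumS_supported _ 0) by (intros n _; simpl; split; ring). simpl; ring.
Qed.

Lemma expect_succ (t : nat) (h : state -> R) :
  expect (S t) h = expect t (expnext p q ps a h).
Proof. exact (sumS_step_mul _ t (dist_supported t) h). Qed.

Lemma expect_ext (t : nat) (f g : state -> R) :
  (forall s, inS s -> f s = g s) -> expect t f = expect t g.
Proof. intros H; apply sumS_ext; intros s Hs; rewrite H by exact Hs; reflexivity. Qed.

Lemma expect_lin (t : nat) (c1 c2 : R) (f g : state -> R) :
  expect t (fun s => c1 * f s + c2 * g s) = c1 * expect t f + c2 * expect t g.
Proof.
  unfold expect. rewrite <- (sumS_lin _ _ t); try apply supported_below_mulr, dist_supported.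
  apply sumS_ext; intros; ring.
Qed.

Lemma expect_mono (t : nat) (f g : state -> R) :
  (forall s, inS s -> f s <= g s) -> expect t f <= expect t g.
Proof.
  intros H. unfold expect.
  rewrite !(sumS_supported _ t) by apply supported_below_mulr, dist_supported.
  assert (Hm : forall s, inS s -> Defs.dist p q ps a t s * f s <= Defs.dist p q ps a t s * g s)
    by (intros s Hs; apply Rmult_le_compat_l; [apply dist_nonneg|apply H]; auto).
  pose proof (Hm (false, false, 0%nat) eq_refl). pose proof (Hm (true, true, 0%nat) eq_refl).
  pose proof (psum_le _ _ t (fun n => Hm (true, false, S n) ltac:(simpl; lia))).
  pose proof (psum_le _ _ t (fun n => Hm (false, true, S n) ltac:(simpl; lia))).
  lra.
Qed.

Lemma expect_one (t : nat) : expect t (fun _ => 1) = 1.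
Proof.
  induction t as [|t IH]; [apply expect_0|].
  rewrite expect_succ; transitivity (expect t (fun _ => 1)); [|exact IH].
  apply expect_ext, inS_ind; intros;
    rewrite ?expnext_000, ?expnext_110, ?expnext_10, ?expnext_01; ring.
Qed.

(* The age grows by at most one per step and survives a step with probability at most
   max(1-p, 1-q). *)
Lemma expect_age_le (t : nat) : expect t age <= / (1 - Rmax (1 - p) (1 - q)).
Proof.
  set (r := Rmax (1 - p) (1 - q)).
  assert (Hr : 1 - p <= r /\ 1 - q <= r /\ r < 1)
    by (repeat split; [apply Rmax_l|apply Rmax_r|apply Rmax_lub_lt; lra]).
  assert (Hinv : r * / (1 - r) + 1 = / (1 - r)) by (field; lra).
  assert (Hpos : 0 < / (1 - r)) by (apply Rinv_0_lt_compat; lra).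
  induction t as [|t IH]; [rewrite expect_0; unfold age; simpl; lra|].
  rewrite expect_succ.
  apply Rle_trans with (expect t (fun s => r * age s + 1 * 1)).
  - apply expect_mono, inS_ind; [| |intros n ..];
      rewrite ?expnext_000, ?expnext_110, ?expnext_10, ?expnext_01; unfold age; simpl snd;
      rewrite ?S_INR; simpl INR;
      match goal with |- context [success_prob ?s] => pose proof (success_prob_bounds s) end.
    + nra.
    + nra.
    + pose proof (age_growth_le (1 - q) (success_prob (true, false, S n)) r (INR n + 1)).
      pose proof (pos_INR n). nra.
    + pose proof (age_growth_le (1 - p) (success_prob (false, true, S n)) r (INR n + 1)).
      pose proof (pos_INR n). nra.
  - rewrite (expect_lin t r 1 age (fun _ => 1)), expect_one. nra.
Qed.

Lemma expect_linear_bound (h : state -> R) (C1 C2 : R) :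
  0 <= C2 -> (forall s, inS s -> Rabs (h s) <= C1 + C2 * age s) ->
  forall t, Rabs (expect t h) <= C1 + C2 * / (1 - Rmax (1 - p) (1 - q)).
Proof.
  intros HC2 Hh t.
  assert (Hup : forall c, (forall s, inS s -> c * h s <= C1 * 1 + C2 * age s) ->
                          c * expect t h <= C1 + C2 * / (1 - Rmax (1 - p) (1 - q))).
  { intros c Hc.
    replace (c * expect t h) with (expect t (fun s => c * h s + 0 * h s))
      by (rewrite expect_lin; ring).
    eapply Rle_trans; [apply expect_mono; intros s Hs; rewrite Rmult_0_l, Rplus_0_r; apply Hc, Hs|].
    rewrite expect_lin, expect_one.
    pose proof (Rmult_le_compat_l _ _ _ HC2 (expect_age_le t)). lra. }
  apply Rabs_le; split.
  - enough (-1 * expect t h <= C1 + C2 * / (1 - Rmax (1 - p) (1 - q))) by lra.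
    apply Hup; intros s Hs; pose proof (proj1 (Rabs_le_between _ _) (Hh s Hs)); lra.
  - enough (1 * expect t h <= C1 + C2 * / (1 - Rmax (1 - p) (1 - q))) by lra.
    apply Hup; intros s Hs; pose proof (proj1 (Rabs_le_between _ _) (Hh s Hs)); lra.
Qed.

Lemma avg_cost_of_poisson (beta lam g : R) (h : state -> R) (C1 C2 : R) :
  0 <= C2 ->
  (forall s, inS s -> stage_cost p q ps beta lam a s = g + h s - expnext p q ps a h s) ->
  (forall s, inS s -> Rabs (h s) <= C1 + C2 * age s) ->
  avg_cost p q ps beta lam a = Finite g.
Proof.
  intros HC2 Hpoisson Hh.
  assert (Hstage : forall t,
            expect t (stage_cost p q ps beta lam a) = g + expect t h - expect (S t) h).
  { intros t.
    rewrite (expect_ext t _ (fun s => g * 1 + 1 * (1 * h s + -1 * expnext p q ps a h s)))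
      by (intros s Hs; rewrite Hpoisson by exact Hs; ring).
    rewrite !expect_lin, expect_one, expect_succ; ring. }
  assert (Hsum : forall T, sum_n (fun t => expect t (stage_cost p q ps beta lam a)) T =
                           (INR T + 1) * g + expect 0 h - expect (S T) h).
  { induction T as [|T IH]; [rewrite sum_O, Hstage; simpl; ring|].
    rewrite sum_Sn, IH, Hstage, S_INR; unfold plus; simpl; ring. }
  unfold avg_cost; apply is_LimSup_seq_unique, is_lim_LimSup_seq.
  apply (is_lim_seq_ext (fun T => g + (expect 0 h - expect (S T) h) / (INR T + 1))).
  { intros T. change (sum_n (fun t => expect t (stage_cost p q ps beta lam a)) T)
      with (sum_n (fun t => sumS (fun s => Defs.dist p q ps a t s
                                         * stage_cost p q ps beta lam a s)) T) in Hsum.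
    rewrite Hsum. field. pose proof (pos_INR T). lra. }
  replace (Finite g) with (Rbar_plus g 0) by (simpl; f_equal; ring).
  apply is_lim_seq_plus'; [apply is_lim_seq_const|].
  apply (is_lim_seq_div_succ _ (2 * (C1 + C2 * / (1 - Rmax (1 - p) (1 - q))))).
  intros n. pose proof (expect_linear_bound h C1 C2 HC2 Hh 0).
  pose proof (expect_linear_bound h C1 C2 HC2 Hh (S n)).
  eapply Rle_trans; [apply Rabs_triang|]. rewrite Rabs_Ropp. lra.
Qed.

End Dynamics.

Section SwitchingPolicy.

Variables (p q ps : R) (dbar : nat).
Hypotheses (hp : 0 < p < 1) (hq : 0 < q < 1) (hps : 0 < ps <= 1) (hdbar : (1 <= dbar)%nat).

Local Notation pb := (1 - p).
Local Notation qb := (1 - q).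
Local Notation pf := (1 - ps).
Local Notation pol := (switching dbar 0).

Lemma qbpf_bounds : 0 <= qb * pf < 1.
Proof. split; nra. Qed.

Lemma pbpf_bounds : 0 <= pb * pf < 1.
Proof. split; nra. Qed.

Lemma switching_000 : pol (false, false, 0%nat) = false.
Proof. apply Nat.eqb_neq; lia. Qed.

Lemma success_prob_sw_000 : success_prob ps pol (false, false, 0%nat) = 0.
Proof. unfold success_prob. rewrite switching_000. reflexivity. Qed.

Lemma success_prob_sw_110 : success_prob ps pol (true, true, 0%nat) = ps.
Proof. reflexivity. Qed.

Lemma success_prob_sw_10 (k : nat) :
  success_prob ps pol (true, false, k) = if Nat.leb dbar k then ps else 0.
Proof. reflexivity. Qed.

Lemma success_prob_sw_01 (k : nat) : success_prob ps pol (false, true, k) = ps.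
Proof. reflexivity. Qed.

Definition nu10 (a : R) (k : nat) : R :=
  if Nat.leb k dbar then p * qb ^ (k - 1) * a
  else p * qb ^ (dbar - 1) * (qb * pf) ^ (k - dbar) * a.

Definition nu01 (b : R) (k : nat) : R := q * pf * (pb * pf) ^ (k - 1) * b.

Definition nu_sw (a b : R) (s : state) : R :=
  match s with
  | (false, false, _) => a
  | (true, true, _) => b
  | (true, false, k) => nu10 a k
  | (false, true, k) => nu01 b k
  end.

Lemma nu10_one (a : R) : nu10 a 1 = p * (1 - success_prob ps pol (false, false, 0%nat)) * a.
Proof.
  rewrite success_prob_sw_000. unfold nu10.
  replace (Nat.leb 1 dbar) with true by (symmetry; apply Nat.leb_le; lia). simpl; ring.
Qed.

Lemma nu10_succ (a : R) (k : nat) :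
  (1 <= k)%nat -> nu10 a (S k) = qb * (1 - success_prob ps pol (true, false, k)) * nu10 a k.
Proof.
  intros Hk. rewrite success_prob_sw_10. unfold nu10.
  destruct (Nat.leb_spec (S k) dbar), (Nat.leb_spec k dbar), (Nat.leb_spec dbar k); try lia.
  - replace (S k - 1)%nat with (S (k - 1)) by lia. simpl; ring.
  - replace k with dbar by lia. replace (S dbar - dbar)%nat with 1%nat by lia. simpl; ring.
  - replace (S k - dbar)%nat with (S (k - dbar)) by lia. simpl; ring.
Qed.

Lemma nu10_tail (a : R) (j : nat) :
  nu10 a (S (dbar - 1 + j)) = p * qb ^ (dbar - 1) * a * (qb * pf) ^ j.
Proof.
  unfold nu10. destruct j as [|j].
  - replace (S (dbar - 1 + 0)) with dbar by lia. rewrite Nat.leb_refl. simpl; ring.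
  - replace (Nat.leb (S (dbar - 1 + S j)) dbar) with false by (symmetry; apply Nat.leb_gt; lia).
    replace (S (dbar - 1 + S j) - dbar)%nat with (S j) by lia. ring.
Qed.

Lemma nu01_one (b : R) : nu01 b 1 = q * (1 - success_prob ps pol (true, true, 0%nat)) * b.
Proof. rewrite success_prob_sw_110. unfold nu01. simpl; ring. Qed.

Lemma nu01_succ (b : R) (k : nat) :
  (1 <= k)%nat -> nu01 b (S k) = pb * (1 - success_prob ps pol (false, true, k)) * nu01 b k.
Proof.
  intros Hk. unfold nu01. rewrite success_prob_sw_01.
  replace (S k - 1)%nat with (S (k - 1)) by lia. simpl; ring.
Qed.

Lemma nu10_nonneg (a : R) (k : nat) : 0 <= a -> 0 <= nu10 a k.
Proof.
  intros Ha. unfold nu10. pose proof qbpf_bounds.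
  destruct (Nat.leb k dbar); repeat apply Rmult_le_pos; try apply pow_le; lra.
Qed.

Lemma nu01_nonneg (b : R) (k : nat) : 0 <= b -> 0 <= nu01 b k.
Proof.
  intros Hb. unfold nu01. pose proof pbpf_bounds.
  repeat apply Rmult_le_pos; try apply pow_le; lra.
Qed.

(* In the paper's notation [mass10_tx] is A, [mass10] is a_1, [mass01] is b_1, [ratio01] is B
   and [norm_sw] is D: relative to the mass of the synchronised state it leaves from, [mass10]
   and [mass01] are the masses of the two chains of desynchronised states and [mass10_tx] that
   of the transmitting part (age >= dbar) of the (1,0,.) chain. *)
Definition mass10_tx : R := p * qb ^ (dbar - 1) / (1 - qb * pf).
Definition mass10 : R := p * (1 - qb ^ (dbar - 1)) / (1 - qb) + mass10_tx.
Definition mass01 : R := q * pf / (1 - pb * pf).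

Lemma mass10_tx_pos : 0 < mass10_tx.
Proof.
  unfold mass10_tx. pose proof qbpf_bounds.
  apply Rdiv_lt_0_compat; [apply Rmult_lt_0_compat; [lra|apply pow_lt; lra]|lra].
Qed.

Lemma mass10_nonneg : 0 <= mass10.
Proof.
  unfold mass10. pose proof mass10_tx_pos.
  assert (qb ^ (dbar - 1) <= 1) by (apply pow_le_one; lra).
  assert (0 <= p * (1 - qb ^ (dbar - 1)) / (1 - qb))
    by (apply Rmult_le_pos; [nra|apply Rlt_le, Rinv_0_lt_compat; lra]).
  lra.
Qed.

Lemma mass01_nonneg : 0 <= mass01.
Proof.
  unfold mass01. pose proof pbpf_bounds.
  apply Rmult_le_pos; [nra|apply Rlt_le, Rinv_0_lt_compat; lra].
Qed.

Lemma mass10_balance : p - q * mass10 = qb * ps * mass10_tx.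
Proof. unfold mass10, mass10_tx. field. split; nra. Qed.

Lemma mass01_balance : q - p * mass01 = ps * (q + pb * mass01).
Proof. unfold mass01. field. nra. Qed.

Lemma is_series_nu10 (a : R) : is_series (fun n => nu10 a (S n)) (mass10 * a).
Proof.
  replace (mass10 * a) with
    (psum (fun n => nu10 a (S n)) (dbar - 1) + p * qb ^ (dbar - 1) * a / (1 - qb * pf)).
  - apply is_series_prefix.
    apply (is_series_ext_R (fun j => p * qb ^ (dbar - 1) * a * (qb * pf) ^ j));
      [intros j; symmetry; apply nu10_tail|].
    apply is_series_geom_scal, qbpf_bounds.
  - rewrite (psum_ext_lt _ (fun n => p * a * qb ^ n)).
    + rewrite psum_scal.
      assert (Hgeom : psum (pow qb) (dbar - 1) = (1 - qb ^ (dbar - 1)) / (1 - qb)).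
      { apply (Rmult_eq_reg_r (1 - qb)); [rewrite psum_geom; field|]; lra. }
      rewrite Hgeom. unfold mass10, mass10_tx. field. pose proof qbpf_bounds. lra.
    + intros k Hk. unfold nu10.
      replace (Nat.leb (S k) dbar) with true by (symmetry; apply Nat.leb_le; lia).
      replace (S k - 1)%nat with k by lia. ring.
Qed.

Lemma is_series_nu10_tx (a : R) :
  is_series (fun n => success_prob ps pol (true, false, S n) * nu10 a (S n))
            (ps * mass10_tx * a).
Proof.
  replace (ps * mass10_tx * a) with
    (psum (fun n => success_prob ps pol (true, false, S n) * nu10 a (S n)) (dbar - 1)
     + ps * (p * qb ^ (dbar - 1) * a) / (1 - qb * pf)).
  - apply is_series_prefix.
    apply (is_series_ext_R (fun j => ps * (p * qb ^ (dbar - 1) * a) * (qb * pf) ^ j));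
      [|apply is_series_geom_scal, qbpf_bounds].
    intros j. rewrite nu10_tail, success_prob_sw_10.
    replace (Nat.leb dbar (S (dbar - 1 + j))) with true by (symmetry; apply Nat.leb_le; lia).
    ring.
  - rewrite (psum_ext_lt _ (fun n => 0 * nu10 a (S n))), psum_scal.
    + unfold mass10_tx. field. pose proof qbpf_bounds. lra.
    + intros k Hk. rewrite success_prob_sw_10.
      replace (Nat.leb dbar (S k)) with false by (symmetry; apply Nat.leb_gt; lia).
      reflexivity.
Qed.

Lemma is_series_nu01 (b : R) : is_series (fun n => nu01 b (S n)) (mass01 * b).
Proof.
  replace (mass01 * b) with (q * pf * b / (1 - pb * pf))
    by (unfold mass01; field; pose proof pbpf_bounds; lra).
  apply (is_series_ext_R (fun n => q * pf * b * (pb * pf) ^ n));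
    [|apply is_series_geom_scal, pbpf_bounds].
  intros n. unfold nu01. replace (S n - 1)%nat with n by lia. ring.
Qed.

Lemma is_series_nu01_tx (b : R) :
  is_series (fun n => success_prob ps pol (false, true, S n) * nu01 b (S n)) (ps * (mass01 * b)).
Proof.
  eapply (is_series_scal_ext ps); [|apply is_series_nu01].
  intros; rewrite success_prob_sw_01; reflexivity.
Qed.

Definition balance000 (a b : R) : Prop :=
  a = pb * a + q * ps * b + q * (mass10 * a) + pb * (ps * (mass01 * b)).
Definition balance110 (a b : R) : Prop :=
  b = qb * b + qb * (ps * mass10_tx * a) + p * (mass01 * b).
Definition normalized (a b : R) : Prop := a + b + mass10 * a + mass01 * b = 1.

Lemma balance000_of_balance110 (a b : R) : balance110 a b -> balance000 a b.
Proof.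
  unfold balance110, balance000. intros H.
  pose proof (f_equal (fun x => x * a) mass10_balance).
  pose proof (f_equal (fun x => x * b) mass01_balance).
  simpl in *. nra.
Qed.

Lemma stationary_nu_sw (a b : R) :
  0 <= a -> 0 <= b -> balance000 a b -> balance110 a b -> normalized a b ->
  stationary p q ps pol (nu_sw a b).
Proof.
  intros Ha Hb H00 H11 Hnorm.
  destruct (sumS_of_series (nu_sw a b) _ _ (is_series_nu10 a) (is_series_nu01 b))
    as [Hsum Hone].
  split; [|split; [exact Hsum|split; [rewrite Hone; exact Hnorm|]]].
  - apply inS_ind; intros; simpl; auto using nu10_nonneg, nu01_nonneg.
  - apply inS_ind; [| |intros [|k] ..].
    + destruct (step_000 p q ps pol (nu_sw a b) _ _ (is_series_nu10 a) (is_series_nu01_tx b))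
        as [Hs Hv].
      split; [exact Hs|]. unfold step in Hv. rewrite Hv, success_prob_sw_110.
      exact (eq_sym H00).
    + destruct (step_110 p q ps pol (nu_sw a b) _ _ (is_series_nu10_tx a) (is_series_nu01 b))
        as [Hs Hv].
      split; [exact Hs|]. unfold step in Hv. rewrite Hv, success_prob_sw_000.
      unfold balance110 in H11. cbn [nu_sw]. lra.
    + destruct (step_10_one p q ps pol (nu_sw a b)) as [Hs Hv].
      split; [exact Hs|]. unfold step in Hv. rewrite Hv; cbn [nu_sw].
      rewrite nu10_one. reflexivity.
    + destruct (step_10_succ p q ps pol (nu_sw a b) k) as [Hs Hv].
      split; [exact Hs|]. unfold step in Hv. rewrite Hv; cbn [nu_sw].
      rewrite (nu10_succ a (S k)) by lia. reflexivity.
    + destruct (step_01_one p q ps pol (nu_sw a b)) as [Hs Hv].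
      split; [exact Hs|]. unfold step in Hv. rewrite Hv; cbn [nu_sw].
      rewrite nu01_one. reflexivity.
    + destruct (step_01_succ p q ps pol (nu_sw a b) k) as [Hs Hv].
      split; [exact Hs|]. unfold step in Hv. rewrite Hv; cbn [nu_sw].
      rewrite (nu01_succ b (S k)) by lia. reflexivity.
Qed.

Lemma stationary_shape (nu : state -> R) :
  stationary p q ps pol nu ->
  (forall s, inS s -> nu s = nu_sw (nu (false, false, 0%nat)) (nu (true, true, 0%nat)) s) /\
  balance110 (nu (false, false, 0%nat)) (nu (true, true, 0%nat)) /\
  normalized (nu (false, false, 0%nat)) (nu (true, true, 0%nat)).
Proof.
  intros (_ & _ & Hone & Hbal).
  set (a := nu (false, false, 0%nat)). set (b := nu (true, true, 0%nat)).
  assert (Hfix : forall s, inS s -> step p q ps pol nu s = nu s) by (intros s Hs; apply Hbal, Hs).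
  assert (H10 : forall n, nu (true, false, S n) = nu10 a (S n)).
  { induction n as [|n IH]; rewrite <- Hfix by (simpl; lia).
    - rewrite (proj2 (step_10_one _ _ _ _ _)), nu10_one. reflexivity.
    - rewrite (proj2 (step_10_succ _ _ _ _ _ n)), IH, (nu10_succ a (S n)) by lia. reflexivity. }
  assert (H01 : forall n, nu (false, true, S n) = nu01 b (S n)).
  { induction n as [|n IH]; rewrite <- Hfix by (simpl; lia).
    - rewrite (proj2 (step_01_one _ _ _ _ _)), nu01_one. reflexivity.
    - rewrite (proj2 (step_01_succ _ _ _ _ _ n)), IH, (nu01_succ b (S n)) by lia. reflexivity. }
  assert (S10 := is_series_ext_R _ _ _ (fun n => eq_sym (H10 n)) (is_series_nu10 a)).
  assert (S01 := is_series_ext_R _ _ _ (fun n => eq_sym (H01 n)) (is_series_nu01 b)).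
  split; [apply inS_ind; auto|split].
  - assert (S10tx : is_series
              (fun n => success_prob ps pol (true, false, S n) * nu (true, false, S n))
              (ps * mass10_tx * a))
      by (eapply is_series_ext_R; [|apply is_series_nu10_tx]; intros n; rewrite H10; reflexivity).
    pose proof (Hfix (true, true, 0%nat) eq_refl) as E.
    rewrite (proj2 (step_110 _ _ _ _ _ _ _ S10tx S01)), success_prob_sw_000 in E.
    unfold balance110. fold b in E. lra.
  - rewrite (proj2 (sumS_of_series _ _ _ S10 S01)) in Hone. exact Hone.
Qed.

Definition ratio01 : R := q / (pb * (1 - pb * pf)).
Definition norm_sw : R := (1 + mass10) * pb * ratio01 + (1 + mass01) * qb * mass10_tx.
Definition nu000_sw : R := pb * ratio01 / norm_sw.
Definition nu110_sw : R := qb * mass10_tx / norm_sw.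

Lemma norm_sw_pos : 0 < norm_sw.
Proof.
  unfold norm_sw, ratio01. pose proof pbpf_bounds. pose proof mass10_tx_pos.
  pose proof mass10_nonneg. pose proof mass01_nonneg.
  assert (0 < q / (pb * (1 - pb * pf))) by (apply Rdiv_lt_0_compat; nra).
  assert (0 < (1 + mass10) * pb) by nra. assert (0 < (1 + mass01) * qb) by nra.
  nra.
Qed.

Lemma closed_form_pos : 0 < nu000_sw /\ 0 < nu110_sw.
Proof.
  unfold nu000_sw, nu110_sw, ratio01. pose proof norm_sw_pos. pose proof pbpf_bounds.
  pose proof mass10_tx_pos.
  split; apply Rdiv_lt_0_compat; auto;
    [apply Rmult_lt_0_compat; [lra|apply Rdiv_lt_0_compat; nra]|nra].
Qed.

Lemma balance110_closed : balance110 nu000_sw nu110_sw.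
Proof.
  unfold balance110, nu000_sw, nu110_sw, ratio01, mass01.
  pose proof norm_sw_pos. pose proof pbpf_bounds. field. split; [lra|split; lra].
Qed.

Lemma normalized_closed : normalized nu000_sw nu110_sw.
Proof.
  unfold normalized, nu000_sw, nu110_sw. pose proof norm_sw_pos.
  unfold norm_sw. field. fold norm_sw. lra.
Qed.

Lemma balance_unique (a b : R) :
  balance110 a b -> normalized a b -> a = nu000_sw /\ b = nu110_sw.
Proof.
  intros H110 Hn.
  pose proof mass10_tx_pos. pose proof mass10_nonneg. pose proof mass01_nonneg.
  assert (Hrel : forall x y, balance110 x y -> y * (q - p * mass01) = x * (qb * ps * mass10_tx))
    by (unfold balance110; intros x y Hxy; lra).
  pose proof normalized_closed as Hn'. unfold normalized in Hn, Hn'.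
  apply (linear2_unique (qb * ps * mass10_tx) (q - p * mass01) (1 + mass10) (1 + mass01)).
  - apply Rmult_le_pos; [apply Rmult_le_pos|]; lra.
  - rewrite mass01_balance. apply Rmult_lt_0_compat; [lra|].
    pose proof (Rmult_le_pos pb mass01 ltac:(lra) ltac:(assumption)). lra.
  - lra.
  - lra.
  - apply Hrel, H110.
  - lra.
  - apply Hrel, balance110_closed.
  - lra.
Qed.

Lemma stationary_closed_form : stationary p q ps pol (nu_sw nu000_sw nu110_sw).
Proof.
  destruct closed_form_pos.
  apply stationary_nu_sw; try lra.
  - apply balance000_of_balance110, balance110_closed.
  - apply balance110_closed.
  - apply normalized_closed.
Qed.

Lemma stationary_eq_closed_form (nu : state -> R) :
  stationary p q ps pol nu -> forall s, inS s -> nu s = nu_sw nu000_sw nu110_sw s.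
Proof.
  intros Hnu. destruct (stationary_shape nu Hnu) as (Hshape & H110 & Hnorm).
  destruct (balance_unique _ _ H110 Hnorm) as [Ha Hb].
  intros s Hs. rewrite Hshape, Ha, Hb by exact Hs. reflexivity.
Qed.

Variables (beta lam : R).

(* A relative value function solving the Poisson equation: affine in the age on each chain of
   desynchronised states, plus a geometric correction below the threshold that makes the two
   affine pieces of the (1,0,.) chain agree at age [dbar]. *)
Definition slope10 : R := qb * beta / q.
Definition icpt10 (g : R) : R := (qb * beta - g + qb * slope10) / q.
Definition slope10_tx : R := qb * pf * beta / (1 - qb * pf).
Definition slope01 : R := pb * pf * (1 - beta) / (1 - pb * pf).
Definition rv110 (g : R) : R :=
  (1 - pb * pf) / (q * ps)
  * (q * pf * (1 - beta) + lam - g + q * pf * slope01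
     + q * pf * (slope01 + lam - g) / (1 - pb * pf)).
Definition icpt10_tx (g : R) : R := (slope10_tx + lam - g + qb * ps * rv110 g) / (1 - qb * pf).
Definition icpt01 (g : R) : R := (slope01 + lam - g + p * rv110 g) / (1 - pb * pf).
Definition corr10 (g : R) : R :=
  slope10_tx * INR dbar + icpt10_tx g - slope10 * INR dbar - icpt10 g.

Definition rv (g : R) (s : state) : R :=
  match s with
  | (false, false, _) => 0
  | (true, true, _) => rv110 g
  | (true, false, k) =>
      if Nat.leb k dbar then slope10 * INR k + icpt10 g + corr10 g * qb ^ (dbar - k)
      else slope10_tx * INR k + icpt10_tx g
  | (false, true, k) => slope01 * INR k + icpt01 g
  end.

Lemma poisson_sw (g : R) :
  g = p * beta + p * rv g (true, false, 1%nat) ->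
  forall s, inS s ->
  stage_cost p q ps beta lam pol s = g + rv g s - expnext p q ps pol (rv g) s.
Proof.
  intros Hg. pose proof qbpf_bounds. pose proof pbpf_bounds.
  unfold stage_cost. apply inS_ind.
  - rewrite !expnext_000, success_prob_sw_000, switching_000.
    change (rv g (false, false, 0%nat)) with 0. cbn [cost]. simpl INR. lra.
  - rewrite !expnext_110, success_prob_sw_110. cbn [switching cost rv Nat.eqb].
    unfold icpt01, rv110. simpl INR. field. lra.
  - intros n. rewrite !expnext_10, success_prob_sw_10. cbn [switching cost rv].
    destruct (Nat.leb_spec dbar (S n)).
    + replace (Nat.leb (S (S n)) dbar) with false by (symmetry; apply Nat.leb_gt; lia).
      destruct (Nat.leb_spec (S n) dbar).
      * replace n with (dbar - 1)%nat by lia. replace (S (dbar - 1)) with dbar by lia.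
        rewrite Nat.sub_diag, !S_INR. unfold corr10, icpt10_tx, slope10_tx. simpl. field. lra.
      * rewrite !S_INR. unfold icpt10_tx, slope10_tx. field. lra.
    + replace (Nat.leb (S (S n)) dbar) with true by (symmetry; apply Nat.leb_le; lia).
      replace (Nat.leb (S n) dbar) with true by (symmetry; apply Nat.leb_le; lia).
      replace (dbar - S n)%nat with (S (dbar - S (S n))) by lia.
      rewrite !S_INR. unfold icpt10, slope10. simpl. field. lra.
  - intros n. rewrite !expnext_01, success_prob_sw_01. cbn [switching cost rv Nat.leb].
    rewrite !S_INR. unfold icpt01, slope01. field. lra.
Qed.

Lemma rv_linear_bound (g : R) :
  exists C1 C2, 0 <= C2 /\ forall s, inS s -> Rabs (rv g s) <= C1 + C2 * age s.
Proof.
  exists (Rabs (icpt10 g) + Rabs (corr10 g) + Rabs (icpt10_tx g) + Rabs (icpt01 g)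
          + Rabs (rv110 g)),
    (Rabs slope10 + Rabs slope10_tx + Rabs slope01).
  pose proof (Rabs_pos slope10). pose proof (Rabs_pos slope10_tx). pose proof (Rabs_pos slope01).
  pose proof (Rabs_pos (icpt10 g)). pose proof (Rabs_pos (corr10 g)).
  pose proof (Rabs_pos (icpt10_tx g)). pose proof (Rabs_pos (icpt01 g)).
  pose proof (Rabs_pos (rv110 g)).
  split; [lra|]. apply inS_ind; unfold age; cbn [rv snd].
  - rewrite Rabs_R0. simpl INR. lra.
  - simpl INR. lra.
  - intros n. pose proof (pos_INR (S n)). destruct (Nat.leb (S n) dbar).
    + assert (Hc : Rabs (qb ^ (dbar - S n)) <= 1).
      { rewrite Rabs_pos_eq by (apply pow_le; lra). apply pow_le_one; lra. }
      pose proof (Rabs_affine_corr_le slope10 (INR (S n)) (icpt10 g) (corr10 g) _ (pos_INR _) Hc).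
      nra.
    + pose proof (Rabs_affine_le slope10_tx (INR (S n)) (icpt10_tx g) (pos_INR _)). nra.
  - intros n. pose proof (pos_INR (S n)).
    pose proof (Rabs_affine_le slope01 (INR (S n)) (icpt01 g) (pos_INR _)). nra.
Qed.

Definition gain_sw : R :=
  beta * p * psi pf qb dbar * nu000_sw
  + (1 - beta) * q * pf * nu110_sw / (1 - pb * pf) ^ 2
  + lam * (mass10_tx * nu000_sw + (1 + mass01) * nu110_sw).

(* The Poisson equation at (0,0,0), where [rv] vanishes. *)
Lemma gain_sw_solvable : gain_sw = p * beta + p * rv gain_sw (true, false, 1%nat).
Proof.
  pose proof norm_sw_pos as HD. pose proof qbpf_bounds. pose proof pbpf_bounds.
  unfold rv. replace (Nat.leb 1 dbar) with true by (symmetry; apply Nat.leb_le; lia). simpl INR.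
  unfold gain_sw, psi, nu000_sw, nu110_sw, corr10, icpt10, icpt10_tx, slope10, slope10_tx,
    rv110, slope01.
  unfold norm_sw, ratio01, mass10, mass10_tx, mass01 in *.
  assert (HX : 0 < qb ^ (dbar - 1) <= 1) by (split; [apply pow_lt|apply pow_le_one]; lra).
  set (X := qb ^ (dbar - 1)) in *. clearbody X.
  field.
  repeat split; try lra; try nra.
  apply Rgt_not_eq.
  assert (0 < (1 - qb) * (1 - qb * pf)) by (apply Rmult_lt_0_compat; lra).
  assert (0 <= p * (1 - X) * (1 - qb * pf)) by (repeat apply Rmult_le_pos; lra).
  assert (0 <= p * X * (1 - qb)) by (repeat apply Rmult_le_pos; lra).
  assert (0 <= (1 - pb * pf + q * pf) * qb * (p * X) * (1 - qb))
    by (repeat apply Rmult_le_pos; nra).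
  nra.
Qed.

Lemma avg_cost_sw : avg_cost p q ps beta lam pol = Finite gain_sw.
Proof.
  destruct (rv_linear_bound gain_sw) as (C1 & C2 & HC2 & Hbound).
  exact (avg_cost_of_poisson p q ps pol hp hq hps beta lam gain_sw (rv gain_sw) C1 C2 HC2
           (poisson_sw gain_sw gain_sw_solvable) Hbound).
Qed.

End SwitchingPolicy.

Theorem lemma2 (p q ps beta lam : R) (dbar : nat)
  (hp : 0 < p < 1) (hq : 0 < q < 1) (hps : 0 < ps <= 1)
  (hbeta : 0 <= beta <= 1) (hlam : 0 <= lam) (hdbar : (1 <= dbar)%nat) :
  let pf := 1 - ps in
  let pb := 1 - p in
  let qb := 1 - q in
  let pi := switching dbar 0 in
  let A := p * qb ^ (dbar - 1) / (1 - qb * pf) in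
  let a1 := p * (1 - qb ^ (dbar - 1)) / (1 - qb) + A in
  let b1 := q * pf / (1 - pb * pf) in
  let B := q / (pb * (1 - pb * pf)) in
  let D := (1 + a1) * pb * B + (1 + b1) * qb * A in
  let nu000 := pb * B / D in
  let nu110 := qb * A / D in
  (exists nu, stationary p q ps pi nu) /\
  (forall nu, stationary p q ps pi nu ->
     nu (false, false, 0%nat) = nu000 /\
     nu (true, true, 0%nat) = nu110 /\
     (forall k, (1 <= k <= dbar)%nat ->
        nu (true, false, k) = p * qb ^ (k - 1) * nu000) /\
     (forall k, (dbar < k)%nat ->
        nu (true, false, k) = p * qb ^ (dbar - 1) * (qb * pf) ^ (k - dbar) * nu000) /\
     (forall k, (1 <= k)%nat ->
        nu (false, true, k) = q * pf * (pb * pf) ^ (k - 1) * nu110)) /\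
  avg_cost p q ps beta lam pi =
    Finite (beta * p * psi pf qb dbar * nu000
            + (1 - beta) * q * pf * nu110 / (1 - pb * pf) ^ 2
            + lam * (A * nu000 + (1 + b1) * nu110)).
Proof.
  intros pf pb qb pi A a1 b1 B D nu000 nu110.
  split; [|split].
  - exists (nu_sw p q ps dbar nu000 nu110).
    exact (stationary_closed_form p q ps dbar hp hq hps hdbar).
  - intros nu Hnu.
    pose proof (stationary_eq_closed_form p q ps dbar hp hq hps hdbar nu Hnu) as Hnu_eq.
    split; [|split; [|split; [|split]]].
    + exact (Hnu_eq (false, false, 0%nat) eq_refl).
    + exact (Hnu_eq (true, true, 0%nat) eq_refl).
    + intros k Hk. rewrite Hnu_eq by (simpl; lia). unfold nu_sw, nu10.
      rewrite (proj2 (Nat.leb_le k dbar)) by lia. reflexivity.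
    + intros k Hk. rewrite Hnu_eq by (simpl; lia). unfold nu_sw, nu10.
      rewrite (proj2 (Nat.leb_gt k dbar)) by lia. reflexivity.
    + intros k Hk. rewrite Hnu_eq by (simpl; lia). reflexivity.
  - exact (avg_cost_sw p q ps dbar hp hq hps hdbar beta lam).
Qed.
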